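(* Let $u$ and $v$ be linear functionals on $\mathbb C[\boldsymbol x]$ and $\hat u=u+v$, with $u$ and $\hat u$ quasi-definite. Then for every $n\in\mathbb Z_+$ $$\hat P_{[n]}(\boldsymbol x)=P_{[n]}(\boldsymbol x)-\big\langle v,\hat P_{[n]}(\boldsymbol y)K_{n-1}(\boldsymbol y,\boldsymbol x)\big\rangle,\qquad \hat H_{[n]}=H_{[n]}+\big\langle v,\hat P_{[n]}(\boldsymbol x)\big(P_{[n]}(\boldsymbol x)\big)^\top\big\rangle,$$ where $v$ acts on the variable $\boldsymbol y$ in the first formula.
   Context: Multi-indices ordered by graded lexicographic order; $\chi(\boldsymbol x)$ the semi-infinite vector of monomials with blocks $\chi_{[k]}=(\boldsymbol x^{\boldsymbol\alpha})_{|\boldsymbol\alpha|=k}$. For a linear functional $u$ on $\mathbb C[\boldsymbol x]$ (applied entrywise to matrices), moment matrix $G=\langle u,\chi\chi^\top\rangle$; $u$ is quasi-definite if all block truncations $G^{[k]}$ (block rows/columns $0,\dots,k-1$) are nonsingular; then $G=S^{-1}HS^{-\top}$ with $S$ block lower unitriangular, $H$ block diagonal with blocks $H_{[k]}$, and $P=S\chi$ with blocks $P_{[k]}$ are the monic multivariate orthogonal polynomials. Hatted objects refer to $\hat u$. Christoffel–Darboux kernel $K_n(\boldsymbol x,\boldsymbol y)=\sum_{m=0}^n P_{[m]}(\boldsymbol x)^\top H_{[m]}^{-1}P_{[m]}(\boldsymbol y)$, $K_{-1}=0$. *)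

From HB Require Import structures.
From mathcomp Require Import all_boot all_order all_algebra.
From mathcomp Require Import mpoly.

Set Implicit Arguments.
Unset Strict Implicit.
Unset Printing Implicit Defensive.

Import Order.TTheory GRing.Theory.
Local Open Scope ring_scope.

Section MOP.
Variables (F : fieldType) (D : nat).

(* multi-indices of degree k, ordered (graded) lexicographically:
   within one degree block, x1^2, x1 x2, x2^2, ... i.e. decreasing in the
   library's lexicographic order on multinomials *)
Definition mons (k : nat) : seq 'X_{1..D} :=
  sort (fun a b => mnmc_le b a)
    [seq bmnm m | m <- enum [pred m : 'X_{1..D < k.+1} | mdeg (bmnm m) == k]].

Definition rk (k : nat) : nat := size (mons k).

Definition chi (k : nat) : 'cV[{mpoly F[D]}]_(rk k) :=
  \col_(i < rk k) 'X_[nth 0%MM (mons k) i].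

Definition monsT (k : nat) : seq 'X_{1..D} :=
  flatten [seq mons j | j <- iota 0 k].

Definition chiT (k : nat) : 'cV[{mpoly F[D]}]_(size (monsT k)) :=
  \col_(i < size (monsT k)) 'X_[nth 0%MM (monsT k) i].

Definition lfun := {linear {mpoly F[D]} -> F^o}.

Definition Gblk (u : lfun) (k l : nat) : 'M[F]_(rk k, rk l) :=
  map_mx u (chi k *m (chi l)^T).

Definition Gtrunc (u : lfun) (k : nat) : 'M[F]_(size (monsT k)) :=
  map_mx u (chiT k *m (chiT k)^T).

Definition quasi_definite (u : lfun) : Prop :=
  forall k, Gtrunc u k \in unitmx.

(* semi-infinite block matrices over F, indexed by block indices *)
Definition blockmx := forall i j : nat, 'M[F]_(rk i, rk j).
Definition blockdiag := forall i : nat, 'M[F]_(rk i).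

(* (S G S^T)_{[i],[j]}, a finite sum since S is block lower triangular *)
Definition SGSt (u : lfun) (S : blockmx) (i j : nat) : 'M[F]_(rk i, rk j) :=
  \sum_(k < i.+1) \sum_(l < j.+1) (S i k *m Gblk u k l *m (S j l)^T).

(* G = S^{-1} H S^{-T}, S block lower unitriangular, H block diagonal
   (stated equivalently as S G S^T = H) *)
Definition gauss_borel (u : lfun) (S : blockmx) (H : blockdiag) : Prop :=
  [/\ (forall i j, (i < j)%N -> S i j = 0),
      (forall i, S i i = 1%:M),
      (forall i j, i != j -> SGSt u S i j = 0) &
      (forall i, SGSt u S i i = H i)].

Definition Pblk (S : blockmx) (n : nat) : 'cV[{mpoly F[D]}]_(rk n) :=
  \sum_(k < n.+1) (map_mx (fun c : F => c%:MP_[D]) (S n k) *m chi k).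

(* polynomials in (y, x): outer variables y, coefficients in C[x] *)
Definition polyYX := {mpoly {mpoly F[D]}[D]}.

Definition inY (p : {mpoly F[D]}) : polyYX := map_mpoly (fun c : F => c%:MP_[D]) p.
Definition inX (p : {mpoly F[D]}) : polyYX := p%:MP_[D].

(* K_{n-1}(y, x) = sum_{m<n} P_[m](y)^T H_[m]^{-1} P_[m](x); K_{-1} = 0 *)
Definition CDkernel (S : blockmx) (H : blockdiag) (n : nat) : polyYX :=
  \sum_(m < n)
    ((map_mx inY (Pblk S m))^T *m map_mx (fun c : F => c%:MP_[D]%:MP_[D]) (invmx (H m))
       *m map_mx inX (Pblk S m)) ord0 ord0.

(* <v_y, q(y,x)> : v acting on the variable y, giving a polynomial in x *)
Definition actY (v : lfun) (q : polyYX) : {mpoly F[D]} :=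
  \sum_(m <- msupp q) (q@_m * (v 'X_[m])%:MP_[D]).

End MOP.

(* Both P̂_[n] and P_[n] are monic of degree n, so P̂_[n] - P_[n] has degree < n and
   is a combination sum_{m<n} B_m P_[m]; pairing with P_[m] against u gives
   B_m H_[m] = <u, (P̂_[n] - P_[n]) P_[m]^T>.  Here <u, P_[n] P_[m]^T> = 0, and since
   u = û - v and P̂_[n] is û-orthogonal to lower degrees, B_m = -<v, P̂_[n] P_[m]^T> H_[m]^-1,
   which is exactly what <v_y, P̂_[n](y) K_{n-1}(y, x)> produces.  Similarly
   Ĥ_[n] = <û, P̂_[n] P_[n]^T> and <u, P̂_[n] P_[n]^T> = H_[n] because each side is
   monic.  Quasi-definiteness of u is needed only to invert the H_[m]: a row x with
   x H_[n] = 0 yields the polynomial x P_[n] orthogonal to all monomials of degree <= n,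
   hence zero since the truncated moment matrix is invertible. *)

From mathcomp Require Import all_boot all_order all_algebra.
From mathcomp Require Import mpoly.
Import GRing.Theory.
Local Open Scope ring_scope.
Set Implicit Arguments.
Unset Strict Implicit.
Unset Printing Implicit Defensive.

Section Monomials.
Variable D : nat.

Lemma mem_mons k (m : 'X_{1..D}) : (m \in mons D k) = (mdeg m == k).
Proof.
rewrite /mons mem_sort; apply/mapP/eqP => [[b]|mk].
  by rewrite mem_enum inE => /eqP bk ->.
have mlt : (mdeg m < k.+1)%N by rewrite mk.
by exists (BMultinom mlt); rewrite ?mem_enum ?inE /= ?mk.
Qed.

Lemma uniq_mons k : uniq (mons D k).
Proof.
rewrite sort_uniq map_inj_uniq ?enum_uniq // => -[a ?] [b ?] /= eab.
by subst b; congr BMultinom; apply: bool_irrelevance.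
Qed.

Lemma mdeg_nth_mons k (i : 'I_(rk D k)) : mdeg (nth 0%MM (mons D k) i) = k.
Proof. by apply/eqP; rewrite -mem_mons mem_nth. Qed.

Lemma mem_monsT k (m : 'X_{1..D}) : (m \in monsT D k) = (mdeg m < k)%N.
Proof.
apply/flatten_mapP/idP => [[j]|mk]; last by exists (mdeg m); rewrite ?mem_iota ?mem_mons.
by rewrite mem_iota add0n mem_mons => /andP[_ jk] /eqP->.
Qed.

Lemma uniq_monsT k : uniq (monsT D k).
Proof.
elim: k => [//|k IHk]; rewrite /monsT -addn1 iotaD map_cat flatten_cat cat_uniq.
rewrite -/(monsT D k) IHk /= cats0 uniq_mons andbT.
by apply/hasPn => m; rewrite mem_mons mem_monsT => /eqP->; rewrite ltnn.
Qed.

Lemma big_msupp_subset (T : nzRingType) (q : {mpoly T[D]}) (V : nmodType)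
    (f : 'X_{1..D} -> V) (s : seq 'X_{1..D}) :
  uniq s -> {subset msupp q <= s} -> (forall m, q@_m = 0 -> f m = 0) ->
  \sum_(m <- msupp q) f m = \sum_(m <- s) f m.
Proof.
move=> s_uniq qs f0; rewrite [RHS](bigID (mem (msupp q))) /=.
rewrite [X in _ + X]big1 ?addr0 => [|m]; last by rewrite -mcoeff_eq0 => /eqP/f0.
rewrite -[RHS]big_filter; apply/perm_big/uniq_perm; rewrite ?filter_uniq //.
by move=> m; rewrite mem_filter; case: (boolP (m \in msupp q)) => //= /qs.
Qed.

End Monomials.

Section ActY.
Variables (F : fieldType) (D : nat) (v : lfun F D).
Local Notation R := {mpoly F[D]}.

Lemma actY_subset (q : polyYX F D) (s : seq 'X_{1..D}) :
  uniq s -> {subset msupp q <= s} ->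
  actY v q = \sum_(m <- s) q@_m * (v 'X_[m])%:MP_[D].
Proof. by move=> s_uniq qs; apply: big_msupp_subset => // m ->; rewrite mul0r. Qed.

Lemma actYD (q1 q2 : polyYX F D) : actY v (q1 + q2) = actY v q1 + actY v q2.
Proof.
pose s := undup (msupp q1 ++ msupp q2 ++ msupp (q1 + q2)).
have s_uniq : uniq s by apply: undup_uniq.
have [s1 s2 s12] : [/\ {subset msupp q1 <= s}, {subset msupp q2 <= s}
    & {subset msupp (q1 + q2) <= s}].
  by split=> m mq; rewrite mem_undup !mem_cat mq ?orbT.
rewrite !(@actY_subset _ s) // -big_split /=.
by apply: eq_bigr => m _; rewrite mcoeffD mulrDl.
Qed.

Lemma actY_sum I (r : seq I) (P : pred I) (f : I -> polyYX F D) :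
  actY v (\sum_(i <- r | P i) f i) = \sum_(i <- r | P i) actY v (f i).
Proof. by apply: (big_morph _ actYD); rewrite /actY msupp0 big_nil. Qed.

Lemma actY_inYM_inX (a b : R) : actY v (inY a * inX b) = (v a)%:MP_[D] * b.
Proof.
have abE m : (inY a * inX b)@_m = (a@_m)%:MP_[D] * b.
  by rewrite /inX mulrC mcoeffCM /inY mcoeff_map_mpoly mulrC.
pose s := undup (msupp a ++ msupp (inY a * inX b)).
have s_uniq : uniq s by apply: undup_uniq.
rewrite (@actY_subset _ s) // => [|m mab]; last by rewrite mem_undup mem_cat mab orbT.
rewrite [in RHS](mpolyE a) raddf_sum.
rewrite (@big_msupp_subset _ _ a _ (fun m => v (a@_m *: 'X_[m])) s) //; first last.
- by move=> m ->; rewrite scale0r raddf0.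
- by move=> m am; rewrite mem_undup mem_cat am.
rewrite rmorph_sum [in RHS]mulr_suml; apply: eq_bigr => m _.
by rewrite abE linearZ /= mpolyCM mulrAC.
Qed.

Lemma inYM (a b : R) : inY (a * b) = inY a * inY b.
Proof. exact: (rmorphM (map_mpoly (@mpolyC D F))). Qed.

Lemma inYC (c : F) : inY (c%:MP_[D]) = c%:MP_[D]%:MP_[D].
Proof. by rewrite /inY map_mpolyC. Qed.

End ActY.

Section GaussBorel.
Variables (F : fieldType) (D : nat).
Local Notation R := {mpoly F[D]}.
Local Notation mxC := (map_mx (fun c : F => c%:MP_[D])).
Local Notation chi := (chi F D).

Lemma lfun_mpolyCM (w : lfun F D) c (p : R) : w (c%:MP_[D] * p) = c * w p.
Proof. by rewrite mul_mpolyC linearZ. Qed.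

Lemma map_lfun_mxCl (w : lfun F D) m n p (A : 'M[F]_(m, n)) (M : 'M[R]_(n, p)) :
  map_mx w (mxC A *m M) = A *m map_mx w M.
Proof.
apply/matrixP=> i j; rewrite !mxE raddf_sum; apply: eq_bigr => k _.
by rewrite !mxE; apply: lfun_mpolyCM.
Qed.

Lemma map_lfun_mxCr (w : lfun F D) m n p (M : 'M[R]_(m, n)) (A : 'M[F]_(n, p)) :
  map_mx w (M *m mxC A) = map_mx w M *m A.
Proof.
apply/matrixP=> i j; rewrite !mxE raddf_sum; apply: eq_bigr => k _.
by rewrite !mxE mulrC [RHS]mulrC; apply: lfun_mpolyCM.
Qed.

Lemma map_mx_mul_trmx (T : Type) (f : R -> T) m n p (A : 'M[R]_(m, p)) (B : 'M[R]_(n, p)) :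
  map_mx f (A *m B^T) = (map_mx f (B *m A^T))^T.
Proof. by rewrite map_trmx trmx_mul trmxK. Qed.

Lemma SGSt_moment (w : lfun F D) (S : blockmx F D) i j :
  SGSt w S i j = map_mx w (Pblk S i *m (Pblk S j)^T).
Proof.
rewrite /SGSt /Pblk mulmx_suml map_mx_sum; apply: eq_bigr => k _.
rewrite raddf_sum /= mulmx_sumr map_mx_sum; apply: eq_bigr => l _.
by rewrite trmx_mul map_trmx !mulmxA map_lfun_mxCr -!mulmxA map_lfun_mxCl mulmxA.
Qed.

Lemma Pblk_monic (S : blockmx F D) n : S n n = 1%:M ->
  Pblk S n = chi n + \sum_(k < n) mxC (S n k) *m chi k.
Proof. by move=> Snn; rewrite /Pblk big_ord_recr /= Snn map_mx1 mul1mx addrC. Qed.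

Lemma chi_Pblk (S : blockmx F D) n : S n n = 1%:M ->
  chi n = Pblk S n - \sum_(k < n) mxC (S n k) *m chi k.
Proof. by move/Pblk_monic->; rewrite addrK. Qed.

Variables (w : lfun F D) (S : blockmx F D) (H : blockdiag F D).
Hypothesis gbS : gauss_borel w S H.

Lemma moment_Pblk_neq i j : i != j -> map_mx w (Pblk S i *m (Pblk S j)^T) = 0.
Proof. by case: gbS => _ _ S0 _ /S0; rewrite SGSt_moment. Qed.

Lemma moment_Pblk_diag i : map_mx w (Pblk S i *m (Pblk S i)^T) = H i.
Proof. by case: gbS => _ _ _ SH; rewrite -SGSt_moment SH. Qed.

Lemma moment_Pblk_chi n k : (k < n)%N -> map_mx w (Pblk S n *m (chi k)^T) = 0.
Proof.
have [_ S1 _ _] := gbS; elim/ltn_ind: k => k IHk kn.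
rewrite (chi_Pblk (S1 k)) raddfB /= mulmxBr map_mxB moment_Pblk_neq ?(gtn_eqF kn) //.
rewrite sub0r raddf_sum /= mulmx_sumr map_mx_sum big1 ?oppr0 // => l _.
by rewrite trmx_mul map_trmx mulmxA map_lfun_mxCr IHk ?mul0mx // (ltn_trans _ kn).
Qed.

Lemma moment_Pblk_lower n N r (f : forall k, 'M[F]_(r, rk D k)) : (N <= n)%N ->
  map_mx w (Pblk S n *m (\sum_(k < N) mxC (f k) *m chi k)^T) = 0.
Proof.
move=> Nn; rewrite raddf_sum /= mulmx_sumr map_mx_sum big1 // => k _.
rewrite trmx_mul map_trmx mulmxA map_lfun_mxCr moment_Pblk_chi ?mul0mx //.
exact: leq_trans (ltn_ord k) Nn.
Qed.

Lemma moment_Pblk_lt (T : blockmx F D) i n : (i < n)%N ->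
  map_mx w (Pblk S n *m (Pblk T i)^T) = 0.
Proof. exact: moment_Pblk_lower. Qed.

Lemma moment_Pblk_chi_diag n : map_mx w (Pblk S n *m (chi n)^T) = H n.
Proof.
have [_ S1 _ _] := gbS; rewrite -moment_Pblk_diag [X in _ = map_mx w (_ *m X^T)](Pblk_monic (S1 n)).
by rewrite raddfD /= mulmxDr map_mxD moment_Pblk_lower ?addr0.
Qed.

Lemma moment_Pblk_monic (T : blockmx F D) n : T n n = 1%:M ->
  map_mx w (Pblk S n *m (Pblk T n)^T) = H n.
Proof.
move=> Tnn; rewrite (Pblk_monic Tnn) raddfD /= mulmxDr map_mxD moment_Pblk_lower //.
by rewrite addr0 moment_Pblk_chi_diag.
Qed.

Lemma moment_monic_Pblk (T : blockmx F D) n : T n n = 1%:M ->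
  map_mx w (Pblk T n *m (Pblk S n)^T) = H n.
Proof.
move=> Tnn; rewrite map_mx_mul_trmx moment_Pblk_monic // -moment_Pblk_diag.
by rewrite -map_mx_mul_trmx.
Qed.

End GaussBorel.

Section Span.
Variables (F : fieldType) (D : nat) (S : blockmx F D).
Local Notation R := {mpoly F[D]}.
Local Notation mxC := (map_mx (fun c : F => c%:MP_[D])).
Local Notation chi := (chi F D).

Definition Pspan r N (q : 'M[R]_(r, 1)) : Prop :=
  exists B : forall m, 'M[F]_(r, rk D m), q = \sum_(m < N) mxC (B m) *m Pblk S m.

Lemma Pspan0 r N : Pspan N (0 : 'M[R]_(r, 1)).
Proof. by exists (fun m => 0); rewrite big1 // => m _; rewrite map_mx0 mul0mx. Qed.

Lemma PspanB r N (q1 q2 : 'M[R]_(r, 1)) :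
  Pspan N q1 -> Pspan N q2 -> Pspan N (q1 - q2).
Proof.
move=> [B1 ->] [B2 ->]; exists (fun m => B1 m - B2 m); rewrite -sumrB.
by apply: eq_bigr => m _; rewrite map_mxB mulmxBl.
Qed.

Lemma PspanD r N (q1 q2 : 'M[R]_(r, 1)) :
  Pspan N q1 -> Pspan N q2 -> Pspan N (q1 + q2).
Proof.
move=> [B1 ->] [B2 ->]; exists (fun m => B1 m + B2 m); rewrite -big_split.
by apply: eq_bigr => m _; rewrite map_mxD mulmxDl.
Qed.

Lemma PspanMl r r' N (A : 'M[F]_(r', r)) (q : 'M[R]_(r, 1)) :
  Pspan N q -> Pspan N (mxC A *m q).
Proof.
move=> [B ->]; exists (fun m => A *m B m); rewrite mulmx_sumr.
by apply: eq_bigr => m _; rewrite map_mxM mulmxA.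
Qed.

Lemma Pspan_sum r N I (s : seq I) (f : I -> 'M[R]_(r, 1)) :
  (forall i, Pspan N (f i)) -> Pspan N (\sum_(i <- s) f i).
Proof. by move=> sf; apply: big_ind => //; [apply: Pspan0 | apply: PspanD]. Qed.

Lemma PspanW r N N' (q : 'M[R]_(r, 1)) : (N <= N')%N -> Pspan N q -> Pspan N' q.
Proof.
move=> NN' [B ->]; exists (fun m => if (m < N)%N then B m else 0).
rewrite (big_ord_widen N' (fun m => mxC (B m) *m Pblk S m)) // big_mkcond.
by apply: eq_bigr => m _; case: ifP; rewrite // map_mx0 mul0mx.
Qed.

Lemma Pspan_Pblk n : Pspan n.+1 (Pblk S n).
Proof.
(* [conform_mx] casts the identity to the type ['M_(rk D n, rk D m)] of the m-th coefficient. *)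
exists (fun m => if m == n then conform_mx 0 (1%:M : 'M[F]_(rk D n)) else 0).
rewrite (bigD1 ord_max) //= eqxx conform_mx_id map_mx1 mul1mx big1 ?addr0 // => m.
by rewrite -val_eqE /= => /negbTE->; rewrite map_mx0 mul0mx.
Qed.

Lemma moment_Pspan (w : lfun F D) (H : blockdiag F D) r N
    (B : forall m, 'M[F]_(r, rk D m)) (j : 'I_N) :
  gauss_borel w S H ->
  map_mx w ((\sum_(m < N) mxC (B m) *m Pblk S m) *m (Pblk S j)^T) = B j *m H j.
Proof.
move=> gbS; rewrite mulmx_suml map_mx_sum (bigD1 j) //= big1 ?addr0 => [|m mj].
  by rewrite -mulmxA map_lfun_mxCl (moment_Pblk_diag gbS).
by rewrite -mulmxA map_lfun_mxCl (moment_Pblk_neq gbS) ?mulmx0.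
Qed.

Hypothesis S1 : forall n, S n n = 1%:M.

Lemma Pspan_chi n : Pspan n.+1 (chi n).
Proof.
elim/ltn_ind: n => n IHn; rewrite (chi_Pblk (S1 n)).
apply: PspanB; first exact: Pspan_Pblk.
by apply: Pspan_sum => k; apply/PspanMl/(@PspanW _ k.+1 n.+1 _ (ltnW (ltn_ord k)))/IHn.
Qed.

Lemma Pspan_lower n r (f : forall k, 'M[F]_(r, rk D k)) :
  Pspan n (\sum_(k < n) mxC (f k) *m chi k).
Proof. by apply: Pspan_sum => k; apply/PspanMl/(@PspanW _ k.+1 n _ (ltn_ord k))/Pspan_chi. Qed.

End Span.

Section QuasiDefinite.
Variables (F : fieldType) (D : nat).
Local Notation R := {mpoly F[D]}.
Local Notation mxC := (map_mx (fun c : F => c%:MP_[D])).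
Local Notation chi := (chi F D).

Lemma mcoeff_mxC_chi k (y : 'rV[F]_(rk D k)) m :
  ((mxC y *m chi k) 0 0)@_m = \sum_(j < rk D k) y 0 j * (nth 0%MM (mons D k) j == m)%:R.
Proof.
rewrite !mxE raddf_sum; apply: eq_bigr => j _.
by rewrite !mxE /= mcoeffCM mcoeffX.
Qed.

Lemma mcoeff_mxC_chi_nth k (y : 'rV[F]_(rk D k)) (j : 'I_(rk D k)) :
  ((mxC y *m chi k) 0 0)@_(nth 0%MM (mons D k) j) = y 0 j.
Proof.
rewrite mcoeff_mxC_chi (bigD1 j) //= eqxx mulr1 big1 ?addr0 // => i ij.
by rewrite nth_uniq ?uniq_mons // (negbTE (ij : val i != val j)) mulr0.
Qed.

Lemma mcoeff_mxC_chi_deg k (y : 'rV[F]_(rk D k)) m :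
  mdeg m != k -> ((mxC y *m chi k) 0 0)@_m = 0.
Proof.
move=> mk; rewrite mcoeff_mxC_chi big1 // => j _.
by case: eqP => [jm|_]; [move: mk; rewrite -jm mdeg_nth_mons eqxx | rewrite mulr0].
Qed.

Lemma mxC_mul_Pblk (S : blockmx F D) n r (x : 'M[F]_(r, rk D n)) :
  mxC x *m Pblk S n = \sum_(k < n.+1) mxC (x *m S n k) *m chi k.
Proof. by rewrite mulmx_sumr; apply: eq_bigr => k _; rewrite mulmxA map_mxM. Qed.

Lemma quasi_definite_mpoly_eq0 (u : lfun F D) N (p : R) : quasi_definite u ->
  (forall m, m \notin monsT D N -> p@_m = 0) ->
  (forall m, m \in monsT D N -> u (p * 'X_[m]) = 0) -> p = 0.
Proof.
move=> qd p_out p_orth; set t := monsT D N.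
have pE : p = \sum_(a < size t) p@_(nth 0%MM t a) *: 'X_[nth 0%MM t a].
  rewrite {1}(mpolyE p) (@big_msupp_subset _ _ _ _ _ t) ?uniq_monsT //.
  - by rewrite (big_nth 0%MM) big_mkord.
  - by move=> m; apply: contraLR => /p_out/eqP; rewrite mcoeff_eq0.
  - by move=> m ->; rewrite scale0r.
pose Y := \row_(a < size t) p@_(nth 0%MM t a).
have /(canRL (mulmxK (qd N))) : Y *m Gtrunc u N = 0.
  apply/rowP => b; rewrite !mxE -[RHS](p_orth (nth 0%MM t b)) ?mem_nth //.
  rewrite [in RHS]pE mulr_suml raddf_sum; apply: eq_bigr => a _.
  by rewrite !mxE big_ord1 !mxE -scalerAl -mul_mpolyC; symmetry; apply: lfun_mpolyCM.
rewrite mul0mx => Y0; apply/mpolyP => m; rewrite mcoeff0.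
case: (boolP (m \in t)) => [mt|/p_out//].
move/rowP: Y0 => /(_ (Ordinal (etrans (index_mem m t) mt))).
by rewrite !mxE /= nth_index.
Qed.

Lemma gauss_borel_unitmx (u : lfun F D) (S : blockmx F D) (H : blockdiag F D) :
  quasi_definite u -> gauss_borel u S H -> forall n, H n \in unitmx.
Proof.
move=> qd gbS n; have [_ S1 _ _] := gbS.
rewrite -row_free_unit; apply/inj_row_free => x xH0.
pose p := (mxC x *m Pblk S n) 0 0.
have pE m : p@_m = \sum_(k < n.+1) ((mxC (x *m S n k) *m chi k) 0 0)@_m.
  by rewrite /p mxC_mul_Pblk summxE raddf_sum /=.
have p_out m : m \notin monsT D n.+1 -> p@_m = 0.
  rewrite mem_monsT -leqNgt => nm; rewrite pE big1 // => k _.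
  by rewrite mcoeff_mxC_chi_deg // gtn_eqF // (leq_trans (ltn_ord k)).
have p_orth m : m \in monsT D n.+1 -> u (p * 'X_[m]) = 0.
  rewrite mem_monsT ltnS => mn.
  have im : (index m (mons D (mdeg m)) < rk D (mdeg m))%N by rewrite index_mem mem_mons.
  have : map_mx u (mxC x *m Pblk S n *m (chi (mdeg m))^T) = 0.
    rewrite -mulmxA map_lfun_mxCl; case: ltngtP mn => // [mn _|-> _].
      by rewrite (moment_Pblk_chi gbS mn) mulmx0.
    by rewrite (moment_Pblk_chi_diag gbS) xH0.
  move/matrixP => /(_ 0 (Ordinal im)).
  by rewrite !mxE big_ord1 !mxE /= nth_index ?mem_mons // => <-; rewrite /p mxE.
have p0 := quasi_definite_mpoly_eq0 qd p_out p_orth.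
apply/rowP => i; rewrite mxE -[x 0 i](mcoeff_mxC_chi_nth _ i).
have := pE (nth 0%MM (mons D n) i); rewrite p0 mcoeff0 big_ord_recr /= S1 mulmx1.
rewrite big1 ?add0r // => k _.
by rewrite mcoeff_mxC_chi_deg // mdeg_nth_mons gtn_eqF.
Qed.

End QuasiDefinite.

Section ChristoffelDarboux.
Variables (F : fieldType) (D : nat) (v : lfun F D) (S : blockmx F D) (H : blockdiag F D).
Local Notation mxC := (map_mx (fun c : F => c%:MP_[D])).

Lemma actY_mul_CDkernel n r (Q : 'cV[{mpoly F[D]}]_r) :
  map_mx (actY v) (map_mx (@inY F D) Q *m (CDkernel S H n)%:M) =
  \sum_(m < n) mxC (map_mx v (Q *m (Pblk S m)^T) *m invmx (H m)) *m Pblk S m.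
Proof.
rewrite mul_mx_scalar; apply/matrixP => i j; rewrite [j]ord1 !mxE summxE.
rewrite /CDkernel mulr_suml actY_sum; apply: eq_bigr => m _.
rewrite !mxE mulr_suml actY_sum; apply: eq_bigr => s _.
rewrite !mxE !mulr_suml actY_sum rmorph_sum mulr_suml; apply: eq_bigr => k _.
rewrite !mxE big_ord1 !mxE.
have -> : inY (Pblk S m k 0) * (invmx (H m) k s)%:MP_[D]%:MP_[D] * inX (Pblk S m s 0)
            * inY (Q i 0)
    = inY ((invmx (H m) k s)%:MP_[D] * (Q i 0 * Pblk S m k 0)) * inX (Pblk S m s 0).
  rewrite !inYM inYC mulrAC; congr (_ * _).
  (* generalizing keeps the commutativity rewrites from unfolding [inY] *)
  move: (inY (Pblk S m k 0)) (inY (Q i 0)) (_%:MP_[D]%:MP_[D]) => a q c.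
  by rewrite mulrAC mulrC [a * q]mulrC.
by rewrite actY_inYM_inX lfun_mpolyCM [_ * invmx _ _ _]mulrC.
Qed.

End ChristoffelDarboux.

Theorem mainTheorem14 (F : fieldType) (D : nat)
  (u v uh : lfun F D) (uhE : forall p, uh p = u p + v p)
  (S Sh : blockmx F D) (H Hh : blockdiag F D) :
  quasi_definite u -> quasi_definite uh ->
  gauss_borel u S H -> gauss_borel uh Sh Hh ->
  forall n : nat,
    Pblk Sh n = Pblk S n -
      map_mx (actY v)
        (map_mx (@inY F D) (Pblk Sh n) *m (CDkernel S H n)%:M)
  /\ Hh n = H n + map_mx v (Pblk Sh n *m (Pblk S n)^T).
Proof.
move=> qd_u _ gbS gbSh n; have [_ S1 _ _] := gbS; have [_ Sh1 _ _] := gbSh.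
have map_uh m1 m2 (A : 'M_(m1, m2)) : map_mx uh A = map_mx u A + map_mx v A.
  by apply/matrixP => i j; rewrite !mxE uhE.
split; last first.
  by rewrite -(moment_Pblk_monic gbSh (S1 n)) map_uh (moment_monic_Pblk gbS (Sh1 n)).
have [B PhE] : Pspan S n (Pblk Sh n - Pblk S n).
  rewrite (Pblk_monic (Sh1 n)) (Pblk_monic (S1 n)) opprD addrACA subrr add0r.
  by apply: PspanB; apply: Pspan_lower.
have BE (j : 'I_n) : B j = - (map_mx v (Pblk Sh n *m (Pblk S j)^T) *m invmx (H j)).
  rewrite -mulNmx; apply: (canRL (mulmxK (gauss_borel_unitmx qd_u gbS j))).
  rewrite -(moment_Pspan B j gbS) -PhE.
  rewrite mulmxBl map_mxB [X in _ - X](moment_Pblk_lt gbS S (ltn_ord j)) subr0.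
  by apply/eqP; rewrite -addr_eq0 -map_uh (moment_Pblk_lt gbSh S (ltn_ord j)).
rewrite actY_mul_CDkernel -[LHS](subrK (Pblk S n)) PhE addrC -sumrN.
by congr (_ + _); apply: eq_bigr => m _; rewrite BE map_mxN mulNmx.
Qed.
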